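(* Consider the algorithm described in the context, suppose it does not terminate finitely, and suppose there is $\sigma_{\min}>0$ with $\sigma_{\min}(J_k)\ge\sigma_{\min}$ for all $k\in\mathbb{N}$ (smallest singular value). If $J_k^Tc_k\ne0$, then $\|c_k+J_ks_k\|_2\le\rho_k\|c_k\|_2$, where $$\rho_k:=\sqrt{\max\big\{1-\kappa_v\alpha_k\sigma_{\min}^2,\ 1-\sigma_{\min}^2/\kappa_{\nabla c}^2\big\}}\in[0,1).$$
   Context: Problem: $\min_{x\in\mathbb{R}^n} f(x)+r(x)$ subject to $c(x)=0$, where $f:\mathbb{R}^n\to\mathbb{R}$ and $c:\mathbb{R}^n\to\mathbb{R}^m$ ($m\le n$) are continuously differentiable and $r:\mathbb{R}^n\to\mathbb{R}_{\ge 0}$ is convex. Write $g(x)=\nabla f(x)$, $J(x)=\nabla c(x)^T$, and $f_k=f(x_k)$, $g_k=g(x_k)$, $c_k=c(x_k)$, $J_k=J(x_k)$, $r_k=r(x_k)$. All norms are Euclidean (spectral norm for matrices). Merit function: $\Phi_\tau(x)=\tau(f(x)+r(x))+\|c(x)\|_2$. Algorithm: inputs $x_0$, $\alpha_0>0$, $\tau_{-1}>0$; constants $\kappa_v>0$, $\sigma_c,\epsilon_\tau,\xi,\eta\in(0,1)$, $\sigma_u\in(0,1/2]$, $\bar\sigma_u:=\sigma_u+\tfrac12$. For $k=0,1,\dots$: 1. If $J_k^Tc_k\ne0$, compute $v_k$ with $v_k\in\mathrm{Range}(J_k^T)$, $\|v_k\|_2\le\kappa_v\alpha_k\|J_k^Tc_k\|_2$,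 $\|c_k+J_kv_k\|_2\le\|c_k+J_kv_k^c\|_2$, where $v_k^c=-\beta_k^cJ_k^Tc_k$ with $\beta_k^c$ minimizing $\tfrac12\|c_k-\beta J_kJ_k^Tc_k\|_2^2$ over $0\le\beta\le\kappa_v\alpha_k$. Otherwise set $v_k=0$, and if $c_k\ne0$ terminate. 2. Let $u_k$ be the unique minimizer of $g_k^Tu+\tfrac1{2\alpha_k}\|u\|_2^2+r(x_k+v_k+u)$ subject to $J_ku=0$; set $s_k=v_k+u_k$. If $s_k=0$, terminate. 3. Let $D_k:=g_k^Ts_k+\bar\sigma_u\|s_k\|_2^2/\alpha_k+r(x_k+s_k)-r_k$; $\tau_{k,\mathrm{trial}}=\infty$ if $D_k\le0$, else $\tau_{k,\mathrm{trial}}=(1-\sigma_c)(\|c_k\|_2-\|c_k+J_kv_k\|_2)/D_k$. Set $\tau_k=\tau_{k-1}$ if $\tau_{k-1}\le\tau_{k,\mathrm{trial}}$, else $\tau_k=\min\{(1-\epsilon_\tau)\tau_{k-1},\tau_{k,\mathrm{trial}}\}$. 4. With $\Delta q_k(s,\tau):=-\tau(g_k^Ts+\tfrac1{2\alpha_k}\|s\|_2^2+r(x_k+s)-r_k)+\|c_k\|_2-\|c_k+J_ks\|_2$: if $\Phi_{\tau_k}(x_k+s_k)\le\Phi_{\tau_k}(x_k)-\eta\Delta q_k(s_k,\tau_k)$ set $x_{k+1}=x_k+s_k$, $\alpha_{k+1}=\alpha_k$; else $x_{k+1}=x_k$, $\alpha_{k+1}=\xi\alpha_k$. Standing assumption: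 there is an open convex set $\mathcal X$ containing all iterates $x_k$ and trial points $x_k+s_k$ such that $f$ is bounded below on $\mathcal X$, $\nabla f$ is bounded and Lipschitz continuous on $\mathcal X$, $c$ is bounded on $\mathcal X$, $\|J(x)\|_2\le\kappa_{\nabla c}$ for $x\in\mathcal X$ (constant $\kappa_{\nabla c}>0$) and $J$ is Lipschitz on $\mathcal X$, and all subgradients of $r$ at points of $\mathcal X$ are uniformly bounded in norm. *)

From HB Require Import structures.
From mathcomp Require Import all_boot all_order all_algebra.
From mathcomp Require Import all_classical all_reals all_analysis.
Set Implicit Arguments. Unset Strict Implicit. Unset Printing Implicit Defensive.
Import Order.TTheory GRing.Theory Num.Theory.
Import numFieldNormedType.Exports.
Local Open Scope classical_set_scope.
Local Open Scope ring_scope.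

Section Defs.
Variable R : realType.

Definition enorm (p : nat) (v : 'cV[R]_p) : R := Num.sqrt (\sum_i (v i 0) ^+ 2).

Definition dotp (p : nat) (u v : 'cV[R]_p) : R := (u^T *m v) 0 0.

(* smallest singular value of J : 'M_(m,n) with m <= n, i.e. min_{||w||=1} ||J^T w|| *)
Definition sigma_min (m n : nat) (J : 'M[R]_(m, n)) : R :=
  inf [set enorm (J^T *m w) | w in [set w : 'cV[R]_m | enorm w = 1]].

Definition specnorm_le (m n : nat) (A : 'M[R]_(m, n)) (L : R) : Prop :=
  forall v : 'cV[R]_n, enorm (A *m v) <= L * enorm v.

Definition is_gradient (n : nat) (f : 'cV[R]_n -> R) (g : 'cV[R]_n -> 'cV[R]_n) :=
  forall x, differentiable f x /\ forall h, 'd f x h = dotp (g x) h.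

Definition is_jacobian (m n : nat) (c : 'cV[R]_n -> 'cV[R]_m) (J : 'cV[R]_n -> 'M[R]_(m, n)) :=
  forall x, differentiable c x /\ forall h, 'd c x h = J x *m h.

Definition convex_fun (n : nat) (r : 'cV[R]_n -> R) :=
  forall x y (t : R), 0 <= t <= 1 ->
    r ((1 - t) *: x + t *: y) <= (1 - t) * r x + t * r y.

Definition convex_set (n : nat) (X : set 'cV[R]_n) :=
  forall x y (t : R), X x -> X y -> 0 <= t <= 1 -> X ((1 - t) *: x + t *: y).

Definition subgradient (n : nat) (r : 'cV[R]_n -> R) (x z : 'cV[R]_n) :=
  forall y, r x + dotp z (y - x) <= r y.

Definition standing_assumption (m n : nat) (f : 'cV[R]_n -> R) (g : 'cV[R]_n -> 'cV[R]_n)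
  (c : 'cV[R]_n -> 'cV[R]_m) (J : 'cV[R]_n -> 'M[R]_(m, n)) (r : 'cV[R]_n -> R)
  (kappa_c : R) (x s : nat -> 'cV[R]_n) : Prop :=
  exists X : set 'cV[R]_n,
    open X /\ convex_set X /\
        (forall k, X (x k) /\ X (x k + s k)) /\
        (exists lb : R, forall y, X y -> lb <= f y) /\
        (exists B : R, forall y, X y -> enorm (g y) <= B) /\
        (exists L : R, forall y z, X y -> X z -> enorm (g y - g z) <= L * enorm (y - z)) /\
        (exists B : R, forall y, X y -> enorm (c y) <= B) /\
        (forall y, X y -> specnorm_le (J y) kappa_c) /\
        (exists L : R, forall y z, X y -> X z -> specnorm_le (J y - J z) (L * enorm (y - z))) /\
        (exists B : R, forall y z, X y -> subgradient r y z -> enorm z <= B).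

(* The iteration of the algorithm: sequences x, alpha, tau (tau k = tau_k,
   tau_{-1} = tau_m1), v, u, s, generated by steps 1-4, without termination. *)
Definition algorithm_run (m n : nat) (f : 'cV[R]_n -> R) (g : 'cV[R]_n -> 'cV[R]_n)
  (c : 'cV[R]_n -> 'cV[R]_m) (J : 'cV[R]_n -> 'M[R]_(m, n)) (r : 'cV[R]_n -> R)
  (kappa_v sigma_c eps_tau xi eta sigma_u tau_m1 : R)
  (x : nat -> 'cV[R]_n) (alpha tau : nat -> R) (v u s : nat -> 'cV[R]_n) : Prop :=
  let sigma_ubar := sigma_u + 2^-1 in
  let Phi (t : R) (y : 'cV[R]_n) := t * (f y + r y) + enorm (c y) in
  forall k : nat,
  let xk := x k in let ak := alpha k in
  let gk := g xk in let ck := c xk in let Jk := J xk in let rk := r xk in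
  let tau_prev := if k is k'.+1 then tau k' else tau_m1 in
  let dq (sd : 'cV[R]_n) (t : R) :=
    - t * (dotp gk sd + (2 * ak)^-1 * enorm sd ^+ 2 + r (xk + sd) - rk)
    + enorm ck - enorm (ck + Jk *m sd) in
  (
   (Jk^T *m ck != 0 ->
      [/\ exists w : 'cV[R]_m, v k = Jk^T *m w,
          enorm (v k) <= kappa_v * ak * enorm (Jk^T *m ck)
        & exists beta : R,
            [/\ 0 <= beta <= kappa_v * ak,
                (forall b : R, 0 <= b <= kappa_v * ak ->
                   2^-1 * enorm (ck - beta *: (Jk *m Jk^T *m ck)) ^+ 2
                   <= 2^-1 * enorm (ck - b *: (Jk *m Jk^T *m ck)) ^+ 2)
              & enorm (ck + Jk *m v k)
                <= enorm (ck + Jk *m (- beta *: (Jk^T *m ck)))]]) /\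
   (Jk^T *m ck = 0 -> v k = 0 /\ ck = 0) /\  (* no termination in step 1 *)
   [/\ Jk *m u k = 0,
       (forall u' : 'cV[R]_n, Jk *m u' = 0 ->
          dotp gk (u k) + (2 * ak)^-1 * enorm (u k) ^+ 2 + r (xk + v k + u k)
          <= dotp gk u' + (2 * ak)^-1 * enorm u' ^+ 2 + r (xk + v k + u'))
     & s k = v k + u k] /\
   s k != 0 /\  (* no termination in step 2 *)
   (let Dk := dotp gk (s k) + sigma_ubar * enorm (s k) ^+ 2 / ak + r (xk + s k) - rk in
    if Dk <= 0 then tau k = tau_prev
    else let trial := (1 - sigma_c) * (enorm ck - enorm (ck + Jk *m v k)) / Dk in
         tau k = (if tau_prev <= trial then tau_prev
                  else Num.min ((1 - eps_tau) * tau_prev) trial)) /\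
   (if Phi (tau k) (xk + s k) <= Phi (tau k) xk - eta * dq (s k) (tau k)
    then x k.+1 = xk + s k /\ alpha k.+1 = ak
    else x k.+1 = xk /\ alpha k.+1 = xi * ak)).

End Defs.

(* Since [J_k u_k = 0], the linearised residual of [s_k] is that of [v_k],
   which is at most that of the Cauchy step [-b J_k^T c_k] for every admissible
   [b] in [[0, kappa_v alpha_k]].  Writing [w = J_k^T c_k], the Cauchy step
   satisfies [||c - b J w||^2 = ||c||^2 - 2b||w||^2 + b^2||J w||^2
   <= ||c||^2 - b||w||^2] as soon as [b kappa_c^2 <= 1], and
   [||w|| >= sigma_min ||c||].  Taking [b = min(kappa_v alpha_k, kappa_c^-2)]
   gives the contraction factor [1 - b sigma_min^2 = rho_k^2 < 1]. *)

From HB Require Import structures.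
From mathcomp Require Import all_boot all_order all_algebra.
From mathcomp Require Import all_classical all_reals all_analysis.
From mathcomp Require Import ring lra.
Import Order.TTheory GRing.Theory Num.Theory.
Import numFieldNormedType.Exports.
Local Open Scope classical_set_scope.
Local Open Scope ring_scope.

Lemma ler_sqrtM_of_sqr {R : rcfType} (a e M : R) :
  0 <= a -> 0 <= e -> a ^+ 2 <= M * e ^+ 2 -> a <= Num.sqrt M * e.
Proof.
move=> a_ge0 e_ge0 sqr_le.
have -> : a = Num.sqrt (a ^+ 2) by rewrite sqrtr_sqr ger0_norm.
have -> : e = Num.sqrt (e ^+ 2) by rewrite sqrtr_sqr ger0_norm.
by rewrite mulrC -sqrtrM ?sqr_ge0 // mulrC ler_wsqrtr.
Qed.

Section EuclideanNorm.
Context {R : realType}.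

Lemma dotpE {p : nat} (u w : 'cV[R]_p) : dotp u w = \sum_i u i 0 * w i 0.
Proof. by rewrite /dotp mxE; apply: eq_bigr => i _; rewrite mxE. Qed.

Lemma enorm_ge0 {p : nat} (u : 'cV[R]_p) : 0 <= enorm u.
Proof. exact: sqrtr_ge0. Qed.

Lemma enorm_sqr {p : nat} (u : 'cV[R]_p) : enorm u ^+ 2 = dotp u u.
Proof.
rewrite /enorm sqr_sqrtr ?dotpE; last by apply: sumr_ge0 => i _; rewrite sqr_ge0.
by apply: eq_bigr => i _; rewrite expr2.
Qed.

Lemma enorm_gt0 {p : nat} (u : 'cV[R]_p) : u != 0 -> 0 < enorm u.
Proof.
move=> u_neq0; rewrite sqrtr_gt0 lt_def sumr_ge0 ?andbT => [|i _]; last exact: sqr_ge0.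
apply: contraNneq u_neq0 => /eqP; rewrite psumr_eq0 => [/allP u0|i _]; last exact: sqr_ge0.
apply/eqP/matrixP => i j; rewrite (ord1 j) mxE.
by apply/eqP; have := u0 i (mem_index_enum _); rewrite implyTb sqrf_eq0.
Qed.

Lemma enormZ {p : nat} (a : R) (u : 'cV[R]_p) : enorm (a *: u) = `|a| * enorm u.
Proof.
rewrite /enorm -sqrtr_sqr -sqrtrM ?sqr_ge0 // mulr_sumr.
by congr Num.sqrt; apply: eq_bigr => i _; rewrite mxE exprMn.
Qed.

Lemma enorm0 {p : nat} : enorm (0 : 'cV[R]_p) = 0.
Proof. by have := enormZ 0 (0 : 'cV[R]_p); rewrite scale0r normr0 mul0r. Qed.

Lemma enorm_subZ_sqr {p : nat} (a : R) (u w : 'cV[R]_p) :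
  enorm (u - a *: w) ^+ 2 = enorm u ^+ 2 - 2 * a * dotp u w + a ^+ 2 * enorm w ^+ 2.
Proof.
rewrite !enorm_sqr !dotpE !mulr_sumr -sumrB -big_split /=.
by apply: eq_bigr => i _; rewrite !mxE; ring.
Qed.

Lemma dotp_mulmx_trmx {m n : nat} (A : 'M[R]_(m, n)) (u : 'cV[R]_m) (w : 'cV[R]_n) :
  dotp u (A *m w) = dotp (A^T *m u) w.
Proof. by rewrite /dotp trmx_mul trmxK mulmxA. Qed.

End EuclideanNorm.

Section CauchyStep.
Context {R : realType} {m n : nat} {A : 'M[R]_(m, n)}.

Lemma sigma_min_mul_le (u : 'cV[R]_m) : sigma_min A * enorm u <= enorm (A^T *m u).
Proof.
have [->|u_neq0] := eqVneq u 0; first by rewrite enorm0 mulr0 enorm_ge0.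
have u_gt0 : 0 < enorm u by exact: enorm_gt0.
rewrite -ler_pdivlMr //; apply: ge_inf.
  by exists 0 => _ [w _ <-]; exact: enorm_ge0.
exists ((enorm u)^-1 *: u); first by rewrite /= enormZ gtr0_norm ?invr_gt0 ?mulVf ?gt_eqF.
by rewrite -scalemxAr enormZ gtr0_norm ?invr_gt0 // mulrC.
Qed.

Lemma specnorm_le_sqr {L : R} (w : 'cV[R]_n) :
  specnorm_le A L -> enorm (A *m w) ^+ 2 <= L ^+ 2 * enorm w ^+ 2.
Proof.
move=> /(_ w) Aw_le; rewrite -exprMn ler_sqr ?nnegrE ?enorm_ge0 //.
exact: le_trans (enorm_ge0 _) Aw_le.
Qed.

Lemma cauchy_step_decrease {L b : R} (u : 'cV[R]_m) :
  specnorm_le A L -> 0 <= b -> b * L ^+ 2 <= 1 ->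
  enorm (u - b *: (A *m A^T *m u)) ^+ 2 <= enorm u ^+ 2 - b * enorm (A^T *m u) ^+ 2.
Proof.
move=> A_le b_ge0 bL_le1; set w := A^T *m u.
rewrite -mulmxA enorm_subZ_sqr dotp_mulmx_trmx -/w -enorm_sqr.
have := specnorm_le_sqr w A_le.
have := sqr_ge0 (enorm w); have := sqr_ge0 (enorm (A *m w)).
have : b ^+ 2 * L ^+ 2 <= b by rewrite expr2 -mulrA ler_piMr.
nra.
Qed.

Lemma cauchy_step_contraction {L b sigma : R} (u : 'cV[R]_m) :
  specnorm_le A L -> 0 <= b -> b * L ^+ 2 <= 1 -> 0 <= sigma -> sigma <= sigma_min A ->
  enorm (u - b *: (A *m A^T *m u)) ^+ 2 <= (1 - b * sigma ^+ 2) * enorm u ^+ 2.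
Proof.
move=> A_le b_ge0 bL_le1 sigma_ge0 sigma_le.
apply: le_trans (cauchy_step_decrease u A_le b_ge0 bL_le1) _.
have : (sigma * enorm u) ^+ 2 <= enorm (A^T *m u) ^+ 2.
  rewrite ler_sqr ?nnegrE ?mulr_ge0 ?enorm_ge0 //.
  exact: le_trans (ler_wpM2r (enorm_ge0 _) sigma_le) (sigma_min_mul_le u).
rewrite exprMn; nra.
Qed.

End CauchyStep.

Lemma standing_assumption_specnorm {R : realType} {m n : nat}
    {f : 'cV[R]_n -> R} {g : 'cV[R]_n -> 'cV[R]_n} {c : 'cV[R]_n -> 'cV[R]_m}
    {J : 'cV[R]_n -> 'M[R]_(m, n)} {r : 'cV[R]_n -> R} {kappa_c : R}
    {x s : nat -> 'cV[R]_n} :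
  standing_assumption f g c J r kappa_c x s -> forall k, specnorm_le (J (x k)) kappa_c.
Proof. by case=> X [_ [_ [X_iter [_ [_ [_ [_ [J_le _]]]]]]]] k; exact/J_le/(X_iter k).1. Qed.

Section AlgorithmRun.
Context {R : realType} {m n : nat}.
Context {f : 'cV[R]_n -> R} {g : 'cV[R]_n -> 'cV[R]_n} {c : 'cV[R]_n -> 'cV[R]_m}.
Context {J : 'cV[R]_n -> 'M[R]_(m, n)} {r : 'cV[R]_n -> R}.
Context {kappa_v sigma_c eps_tau xi eta sigma_u tau_m1 : R}.
Context {x : nat -> 'cV[R]_n} {alpha tau : nat -> R} {v u s : nat -> 'cV[R]_n}.
Hypothesis run : algorithm_run f g c J r kappa_v sigma_c eps_tau xi eta sigma_u tau_m1
  x alpha tau v u s.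

Lemma algorithm_run_alpha_gt0 : 0 < alpha 0 -> 0 < xi -> forall k, 0 < alpha k.
Proof.
move=> alpha0_gt0 xi_gt0; elim=> // k alpha_gt0.
have /= [_ [_ [_ [_ [_ step4]]]]] := run k.
by case: ifP step4 => _ [_ ->] //; rewrite mulr_gt0.
Qed.

Lemma algorithm_run_residual_le_cauchy k b :
  (J (x k))^T *m c (x k) != 0 -> 0 <= b <= kappa_v * alpha k ->
  enorm (c (x k) + J (x k) *m s k)
    <= enorm (c (x k) - b *: (J (x k) *m (J (x k))^T *m c (x k))).
Proof.
move=> w_neq0 b_adm.
have /= [step1 [_ [[Ju0 _ s_def] _]]] := run k.
have [_ _ [beta [_ beta_min v_le]]] := step1 w_neq0.
have -> : J (x k) *m s k = J (x k) *m v k by rewrite s_def mulmxDr Ju0 addr0.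
apply: le_trans v_le _.
rewrite scaleNr mulmxN -scalemxAr mulmxA.
have half_gt0 : 0 < 2^-1 :> R by rewrite invr_gt0.
by rewrite -ler_sqr ?nnegrE ?enorm_ge0 // -(ler_pM2l half_gt0); exact: beta_min.
Qed.

End AlgorithmRun.

Theorem lemma3p12 (R : realType) (m n : nat) (hmn : (m <= n)%N)
  (f : 'cV[R]_n -> R) (g : 'cV[R]_n -> 'cV[R]_n)
  (c : 'cV[R]_n -> 'cV[R]_m) (J : 'cV[R]_n -> 'M[R]_(m, n)) (r : 'cV[R]_n -> R)
  (kappa_c kappa_v sigma_c eps_tau xi eta sigma_u tau_m1 alpha0 sigmin : R)
  (x : nat -> 'cV[R]_n) (alpha tau : nat -> R) (v u s : nat -> 'cV[R]_n) :
  is_gradient f g -> continuous g ->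
  is_jacobian c J -> continuous J ->
  (forall y, 0 <= r y) -> convex_fun r ->
  0 < kappa_c ->
  standing_assumption f g c J r kappa_c x s ->
  0 < alpha0 -> 0 < tau_m1 -> 0 < kappa_v ->
  0 < sigma_c < 1 -> 0 < eps_tau < 1 -> 0 < xi < 1 -> 0 < eta < 1 ->
  0 < sigma_u <= 2^-1 ->
  alpha 0%N = alpha0 ->
  algorithm_run f g c J r kappa_v sigma_c eps_tau xi eta sigma_u tau_m1 x alpha tau v u s ->
  0 < sigmin -> (forall k, sigmin <= sigma_min (J (x k))) ->
  forall k : nat, (J (x k))^T *m c (x k) != 0 ->
    let rho := Num.sqrt (Num.max (1 - kappa_v * alpha k * sigmin ^+ 2)
                                 (1 - sigmin ^+ 2 / kappa_c ^+ 2)) in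
    [/\ 0 <= rho, rho < 1 &
        enorm (c (x k) + J (x k) *m s k) <= rho * enorm (c (x k))].
Proof.
move=> _ _ _ _ _ _ kc_gt0 SA alpha0_gt0 _ kv_gt0 _ _ /andP[xi_gt0 _] _ _ alpha0_def run
  sigmin_gt0 sigmin_le k w_neq0 rho.
have alphak_gt0 : 0 < alpha k.
  by apply: (algorithm_run_alpha_gt0 run) => //; rewrite alpha0_def.
set b := Num.min (kappa_v * alpha k) (kappa_c ^+ 2)^-1.
have b_gt0 : 0 < b by rewrite lt_min mulr_gt0 ?invr_gt0 ?exprn_gt0.
have b_le : b <= kappa_v * alpha k by rewrite ge_min lexx.
have bkc_le1 : b * kappa_c ^+ 2 <= 1.
  by rewrite -ler_pdivlMr ?exprn_gt0 // mul1r ge_min lexx orbT.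
have rho_sqr : Num.max (1 - kappa_v * alpha k * sigmin ^+ 2) (1 - sigmin ^+ 2 / kappa_c ^+ 2)
    = 1 - b * sigmin ^+ 2.
  rewrite /b mulrC (mulrC (_ ^+ 2)); have := exprn_gt0 2 sigmin_gt0.
  by case: (leP (kappa_v * alpha k) _) => ?; [rewrite max_l | rewrite max_r]; nra.
rewrite {}/rho rho_sqr; split; first exact: sqrtr_ge0.
  have bs_gt0 := mulr_gt0 b_gt0 (exprn_gt0 2 sigmin_gt0).
  by rewrite -[X in _ < X](sqrtr1 R) ltr_sqrt //; lra.
have b_adm : 0 <= b <= kappa_v * alpha k by rewrite (ltW b_gt0) b_le.
apply: le_trans (algorithm_run_residual_le_cauchy run k b w_neq0 b_adm) _.
apply: ler_sqrtM_of_sqr; rewrite ?enorm_ge0 //.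
exact: cauchy_step_contraction (c (x k)) (standing_assumption_specnorm SA k) (ltW b_gt0) bkc_le1
  (ltW sigmin_gt0) (sigmin_le k).
Qed.
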